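(* Let $n\ge3$, $B$ the closed unit disc, $X\in C^3(B,\mathbb R^n)$ a conformally parametrized immersion ($X_u\cdot X_u=W=X_v\cdot X_v$, $X_u\cdot X_v=0$) with a $C^2$ orthonormal normal section $\{N_1,\dots,N_{n-2}\}$, second fundamental forms $L_{\sigma,ij}=X_{u^iu^j}\cdot N_\sigma$, mean curvatures $H_\sigma=\frac{L_{\sigma,11}+L_{\sigma,22}}{2W}$ and torsion coefficients $T^\omega_{\sigma,i}$. Define the Hopf functions $\mathcal H_\sigma:=L_{\sigma,11}-L_{\sigma,22}-2iL_{\sigma,12}$. Then for all $\sigma=1,\dots,n-2$, $$\mathcal H_{\sigma,\overline w}=2H_{\sigma,w}W+\sum_{\omega=1}^{n-2}\Big\{(L_{\omega,22}+iL_{\omega,12})T^\sigma_{\omega,1}-(L_{\omega,21}+iL_{\omega,11})T^\sigma_{\omega,2}\Big\}.$$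
   Context: $w=u+iv$, $\Phi_w=\frac12(\Phi_u-i\Phi_v)$, $\Phi_{\overline w}=\frac12(\Phi_u+i\Phi_v)$. Orthonormal normal section: $N_\sigma\cdot X_{u^i}=0$, $N_\sigma\cdot N_\omega=\delta_{\sigma\omega}$ ($u^1=u,u^2=v$). Torsion coefficients: $T^\omega_{\sigma,i}=N_{\sigma,u^i}\cdot N_\omega$ for $\sigma\ne\omega$, $T^\sigma_{\sigma,i}=0$. *)

From Stdlib Require Import Reals.
From Coquelicot Require Import Coquelicot.
Open Scope R_scope.

Definition pu (f : R -> R -> R) (u v : R) : R := Derive (fun t => f t v) u.
Definition pv (f : R -> R -> R) (u v : R) : R := Derive (fun t => f u t) v.
(* partial w.r.t. u^i, with u^1 = u, u^2 = v *)
Definition pd (i : nat) (f : R -> R -> R) : R -> R -> R :=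
  if Nat.eqb i 1 then pu f else pv f.

(* Open unit udisc (interior of B). *)
Definition udisc (u v : R) : Prop := u ^ 2 + v ^ 2 < 1.

Fixpoint Ck (k : nat) (U : R -> R -> Prop) (f : R -> R -> R) : Prop :=
  (forall u v, U u v -> continuous (fun p : R * R => f (fst p) (snd p)) (u, v)) /\
  match k with
  | O => True
  | S k' =>
      (forall u v, U u v -> ex_derive (fun t => f t v) u /\ ex_derive (fun t => f u t) v)
      /\ Ck k' U (pu f) /\ Ck k' U (pv f)
  end.

Fixpoint sumR (n : nat) (f : nat -> R) : R :=
  match n with O => 0 | S m => sumR m f + f m end.
Fixpoint sumC (n : nat) (f : nat -> C) : C :=
  match n with O => RtoC 0 | S m => Cplus (sumC m f) (f m) end.

(* A map into R^n, given by its components k = 0..n-1. *)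
Definition VecFun := nat -> R -> R -> R.

Definition dotF (n : nat) (A B : VecFun) (u v : R) : R :=
  sumR n (fun k => A k u v * B k u v).

Definition pdV (i : nat) (A : VecFun) : VecFun := fun k => pd i (A k).

Definition Lff (n : nat) (X : VecFun) (N : nat -> VecFun) (s i j : nat) (u v : R) : R :=
  dotF n (pdV i (pdV j X)) (N s) u v.

Definition Wf (n : nat) (X : VecFun) (u v : R) : R := dotF n (pdV 1 X) (pdV 1 X) u v.

Definition Hmean (n : nat) (X : VecFun) (N : nat -> VecFun) (s : nat) (u v : R) : R :=
  (Lff n X N s 1 1 u v + Lff n X N s 2 2 u v) / (2 * Wf n X u v).

(* Torsion coefficients: Tor n N om s i = T^om_{s,i} = N_{s,u^i} . N_om (s <> om), 0 if s = om. *)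
Definition Tor (n : nat) (N : nat -> VecFun) (om s i : nat) (u v : R) : R :=
  if Nat.eqb s om then 0 else dotF n (pdV i (N s)) (N om) u v.

Definition Hopf (n : nat) (X : VecFun) (N : nat -> VecFun) (s : nat) (u v : R) : C :=
  (Lff n X N s 1 1 u v - Lff n X N s 2 2 u v, - (2 * Lff n X N s 1 2 u v)).

Definition Cpu (F : R -> R -> C) (u v : R) : C :=
  (pu (fun a b => fst (F a b)) u v, pu (fun a b => snd (F a b)) u v).
Definition Cpv (F : R -> R -> C) (u v : R) : C :=
  (pv (fun a b => fst (F a b)) u v, pv (fun a b => snd (F a b)) u v).
Definition d_w (F : R -> R -> C) (u v : R) : C :=
  Cmult (RtoC (1/2)) (Cminus (Cpu F u v) (Cmult Ci (Cpv F u v))).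
Definition d_wbar (F : R -> R -> C) (u v : R) : C :=
  Cmult (RtoC (1/2)) (Cplus (Cpu F u v) (Cmult Ci (Cpv F u v))).
Definition cplx (f : R -> R -> R) : R -> R -> C := fun u v => RtoC (f u v).

From Stdlib Require Import Reals Lia Lra.
From Coquelicot Require Import Coquelicot.
From mathcomp Require all_boot all_algebra Rstruct.
Open Scope R_scope.

(* Differentiating L_{s,ij} = X_{u^i u^j} . N_s, the third-derivative terms cancel by symmetry
   of mixed partials, and what remains are the products X_{u^i u^j} . N_{s,u^k}.  These are
   expanded in the orthogonal frame X_u, X_v, N_1, ..., N_{n-2}, which is complete because
   E E^T = 1 forces E^T E = 1 for a square matrix E.  In that frame the Weingarten relations
   N_{s,i} . X_j = - L_{s,ij}, the torsion coefficients, and the identities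
   X_{ij} . X_k = +-W_{u^l}/2 coming from conformality give the two real Codazzi equations,
   which are the real and imaginary parts of the formula for the Wirtinger derivative of the
   Hopf function. *)

(* MathComp is imported only inside this module, so that its notations do not shadow
   those of [R_scope] in the rest of the file. *)
Module OrthonormalBasis.
Import all_boot all_algebra Rstruct.

Section Matrix.
Local Open Scope ring_scope.

Lemma orthonormal_mulmx_tr {K : comUnitRingType} {m n : nat} (E : 'M[K]_n)
    (A B : 'M[K]_(m, n)) :
  E *m E^T = 1%:M -> (A *m E^T) *m (B *m E^T)^T = A *m B^T.
Proof.
by move=> /mulmx1C EtE; rewrite trmx_mul trmxK mulmxA -(mulmxA A) EtE mulmx1.
Qed.

End Matrix.

Lemma sumR_big (n : nat) (f : nat -> R) : sumR n f = (\sum_(i < n) f i)%R.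
Proof. by elim: n => [|n IH]; rewrite ?big_ord0 // big_ord_recr /= IH. Qed.

Lemma parseval (n : nat) (e : nat -> nat -> R) (a b : nat -> R) :
  (forall i j, (i < n)%coq_nat -> (j < n)%coq_nat ->
     sumR n (fun k => e i k * e j k) = if Nat.eqb i j then 1 else 0) ->
  sumR n (fun k => a k * b k) =
  sumR n (fun i => sumR n (fun k => a k * e i k) * sumR n (fun k => b k * e i k)).
Proof.
move=> e_orthonormal.
pose E : 'M[R]_n := (\matrix_(i, k) e i k)%R.
have EEt : (E *m E^T = 1%:M)%R.
  apply/matrixP => i j; rewrite !mxE.
  under eq_bigr do rewrite !mxE.
  rewrite -(sumR_big n (fun k => e i k * e j k)) e_orthonormal; try exact/ltP.
  case: (PeanoNat.Nat.eqb_spec i j) => [/val_inj -> | ne]; first by rewrite eqxx.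
  by case: eqP => // ij; case: ne; rewrite ij.
transitivity (((\row_(k < n) a k) *m (\row_(k < n) b k)^T) 0 0)%R.
  by rewrite mxE sumR_big; apply: eq_bigr => k _; rewrite !mxE.
rewrite -(orthonormal_mulmx_tr E _ _ EEt) mxE sumR_big; apply: eq_bigr => i _.
by rewrite !mxE !sumR_big; congr (_ * _); apply: eq_bigr => k _; rewrite !mxE.
Qed.
End OrthonormalBasis.

Lemma sumR_ext (n : nat) (f g : nat -> R) :
  (forall k, (k < n)%nat -> f k = g k) -> sumR n f = sumR n g.
Proof.
induction n as [|n IH]; intros Hfg; simpl; [reflexivity|].
rewrite IH, Hfg; auto with arith.
Qed.

Lemma sumR_plus (n : nat) (f g : nat -> R) :
  sumR n (fun k => f k + g k) = sumR n f + sumR n g.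
Proof. induction n as [|n IH]; simpl; [ring|rewrite IH; ring]. Qed.

Lemma sumR_minus (n : nat) (f g : nat -> R) :
  sumR n (fun k => f k - g k) = sumR n f - sumR n g.
Proof. induction n as [|n IH]; simpl; [ring|rewrite IH; ring]. Qed.

Lemma sumR_div (n : nat) (f : nat -> R) (c : R) :
  c <> 0 -> sumR n (fun k => f k / c) = sumR n f / c.
Proof. intros Hc; induction n as [|n IH]; simpl; [field|rewrite IH; field]; assumption. Qed.

Lemma sumR_recl (n : nat) (f : nat -> R) :
  sumR (S n) f = f 0%nat + sumR n (fun k => f (S k)).
Proof. induction n as [|n IH]; simpl in *; [ring|rewrite IH; ring]. Qed.

Lemma sumR_recl2 (n : nat) (f : nat -> R) :
  (2 <= n)%nat -> sumR n f = f 0%nat + f 1%nat + sumR (n - 2) (fun k => f (S (S k))).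
Proof.
intros Hn; destruct n as [|[|n]]; [lia|lia|].
rewrite !sumR_recl; replace (S (S n) - 2)%nat with n by lia; ring.
Qed.

Lemma sumC_fst (n : nat) (f : nat -> C) : fst (sumC n f) = sumR n (fun k => fst (f k)).
Proof. induction n as [|n IH]; simpl; [reflexivity|rewrite IH; reflexivity]. Qed.

Lemma sumC_snd (n : nat) (f : nat -> C) : snd (sumC n f) = sumR n (fun k => snd (f k)).
Proof. induction n as [|n IH]; simpl; [reflexivity|rewrite IH; reflexivity]. Qed.

Lemma parseval_orthogonal (n : nat) (e : nat -> nat -> R) (c : nat -> R) (a b : nat -> R) :
  (forall i, (i < n)%nat -> 0 < c i) ->
  (forall i j, (i < n)%nat -> (j < n)%nat ->
     sumR n (fun k => e i k * e j k) = if Nat.eqb i j then c i else 0) ->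
  sumR n (fun k => a k * b k) =
  sumR n (fun i => sumR n (fun k => a k * e i k) * sumR n (fun k => b k * e i k) / c i).
Proof.
intros c_pos e_orthogonal.
assert (sqrt_c_pos : forall i, (i < n)%nat -> 0 < sqrt (c i)) by (intros; apply sqrt_lt_R0; auto).
assert (sqrt_c_sqr : forall i, (i < n)%nat -> sqrt (c i) * sqrt (c i) = c i)
  by (intros i Hi; apply sqrt_sqrt, Rlt_le, c_pos, Hi).
assert (dot_normalized : forall f i, (i < n)%nat ->
          sumR n (fun k => f k * (e i k / sqrt (c i)))
          = sumR n (fun k => f k * e i k) / sqrt (c i)).
{ intros f i Hi. rewrite <- sumR_div by (apply Rgt_not_eq, sqrt_c_pos, Hi).
  apply sumR_ext; intros k _; field; apply Rgt_not_eq, sqrt_c_pos, Hi. }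
rewrite (OrthonormalBasis.parseval n (fun i k => e i k / sqrt (c i))).
- apply sumR_ext; intros i Hi.
  rewrite !dot_normalized by exact Hi.
  specialize (sqrt_c_pos i Hi). specialize (sqrt_c_sqr i Hi).
  set (r := sqrt (c i)) in *. rewrite <- sqrt_c_sqr. field. lra.
- intros i j Hi Hj.
  specialize (sqrt_c_pos i Hi) as ri_pos. specialize (sqrt_c_pos j Hj) as rj_pos.
  rewrite dot_normalized by exact Hj.
  rewrite (sumR_ext n _ (fun k => e i k * e j k / sqrt (c i))) by (intros; field; lra).
  rewrite sumR_div, e_orthogonal by (auto; lra).
  destruct (Nat.eqb_spec i j) as [<-|_]; [|field; lra].
  rewrite <- (sqrt_c_sqr i Hi) at 1. field. lra.
Qed.

Definition ex_partials (f : R -> R -> R) (u v : R) : Prop :=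
  ex_derive (fun t => f t v) u /\ ex_derive (fun t => f u t) v.

Definition ex_partialsV (n : nat) (A : VecFun) (u v : R) : Prop :=
  forall k, (k < n)%nat -> ex_partials (A k) u v.

Section PartialDerivatives.
Variables (i : nat) (u v : R).

Lemma ex_partials_plus (f g : R -> R -> R) :
  ex_partials f u v -> ex_partials g u v -> ex_partials (fun a b => f a b + g a b) u v.
Proof.
intros [fu fv] [gu gv]; split;
  [apply (ex_derive_plus (fun t => f t v) (fun t => g t v))
  |apply (ex_derive_plus (fun t => f u t) (fun t => g u t))]; assumption.
Qed.

Lemma ex_partials_scal (c : R) (f : R -> R -> R) :
  ex_partials f u v -> ex_partials (fun a b => c * f a b) u v.
Proof.
intros [fu fv]; split;
  [apply (ex_derive_scal (fun t => f t v))|apply (ex_derive_scal (fun t => f u t))]; assumption.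
Qed.

Lemma ex_partials_mult (f g : R -> R -> R) :
  ex_partials f u v -> ex_partials g u v -> ex_partials (fun a b => f a b * g a b) u v.
Proof. intros [fu fv] [gu gv]; split; apply ex_derive_mult; assumption. Qed.

Lemma pd_plus (f g : R -> R -> R) :
  ex_partials f u v -> ex_partials g u v ->
  pd i (fun a b => f a b + g a b) u v = pd i f u v + pd i g u v.
Proof.
intros [fu fv] [gu gv]; unfold pd, pu, pv; destruct (Nat.eqb i 1);
  [apply (Derive_plus (fun t => f t v) (fun t => g t v))
  |apply (Derive_plus (fun t => f u t) (fun t => g u t))]; assumption.
Qed.

Lemma pd_minus (f g : R -> R -> R) :
  ex_partials f u v -> ex_partials g u v ->
  pd i (fun a b => f a b - g a b) u v = pd i f u v - pd i g u v.
Proof.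
intros [fu fv] [gu gv]; unfold pd, pu, pv; destruct (Nat.eqb i 1);
  [apply (Derive_minus (fun t => f t v) (fun t => g t v))
  |apply (Derive_minus (fun t => f u t) (fun t => g u t))]; assumption.
Qed.

Lemma pd_mult (f g : R -> R -> R) :
  ex_partials f u v -> ex_partials g u v ->
  pd i (fun a b => f a b * g a b) u v = pd i f u v * g u v + f u v * pd i g u v.
Proof.
intros [fu fv] [gu gv]; unfold pd, pu, pv; destruct (Nat.eqb i 1);
  [apply (Derive_mult (fun t => f t v) (fun t => g t v))
  |apply (Derive_mult (fun t => f u t) (fun t => g u t))]; assumption.
Qed.

Lemma pd_div (f g : R -> R -> R) :
  ex_partials f u v -> ex_partials g u v -> g u v <> 0 ->
  pd i (fun a b => f a b / g a b) u v = (pd i f u v * g u v - f u v * pd i g u v) / g u v ^ 2.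
Proof.
intros [fu fv] [gu gv] g_nz; unfold pd, pu, pv; destruct (Nat.eqb i 1);
  [apply (Derive_div (fun t => f t v) (fun t => g t v))
  |apply (Derive_div (fun t => f u t) (fun t => g u t))]; assumption.
Qed.

Lemma pd_scal (c : R) (f : R -> R -> R) : pd i (fun a b => c * f a b) u v = c * pd i f u v.
Proof. unfold pd, pu, pv; destruct (Nat.eqb i 1); apply Derive_scal. Qed.

Lemma pd_opp (f : R -> R -> R) : pd i (fun a b => - f a b) u v = - pd i f u v.
Proof. unfold pd, pu, pv; destruct (Nat.eqb i 1); apply Derive_opp. Qed.

Lemma pd_const (c : R) : pd i (fun _ _ => c) u v = 0.
Proof. unfold pd, pu, pv; destruct (Nat.eqb i 1); apply Derive_const. Qed.

Lemma ex_partials_sumR (m : nat) (F : nat -> R -> R -> R) :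
  (forall k, (k < m)%nat -> ex_partials (F k) u v) ->
  ex_partials (fun a b => sumR m (fun k => F k a b)) u v.
Proof.
induction m as [|m IH]; intros HF; simpl.
- split; apply ex_derive_const.
- apply ex_partials_plus; [apply IH; auto|apply HF; auto].
Qed.

Lemma pd_sumR (m : nat) (F : nat -> R -> R -> R) :
  (forall k, (k < m)%nat -> ex_partials (F k) u v) ->
  pd i (fun a b => sumR m (fun k => F k a b)) u v = sumR m (fun k => pd i (F k) u v).
Proof.
induction m as [|m IH]; intros HF; simpl.
- apply pd_const.
- rewrite pd_plus, IH by (auto; apply ex_partials_sumR; auto). reflexivity.
Qed.

Lemma ex_partials_dotF (n : nat) (A B : VecFun) :
  ex_partialsV n A u v -> ex_partialsV n B u v -> ex_partials (dotF n A B) u v.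
Proof.
intros HA HB; apply (ex_partials_sumR n (fun k a b => A k a b * B k a b)).
intros k Hk; apply ex_partials_mult; auto.
Qed.

Lemma pd_dotF (n : nat) (A B : VecFun) :
  ex_partialsV n A u v -> ex_partialsV n B u v ->
  pd i (dotF n A B) u v = dotF n (pdV i A) B u v + dotF n A (pdV i B) u v.
Proof.
intros HA HB; unfold dotF.
rewrite (pd_sumR n (fun k a b => A k a b * B k a b)) by (intros; apply ex_partials_mult; auto).
rewrite <- sumR_plus. apply sumR_ext; intros k Hk. apply pd_mult; auto.
Qed.

End PartialDerivatives.

Lemma udisc_locally_2d (u v : R) : udisc u v -> locally_2d udisc u v.
Proof.
unfold udisc; intros Huv.
set (d := Rmin 1 ((1 - (u ^ 2 + v ^ 2)) / 6)).
assert (d_pos : 0 < d) by (apply Rmin_pos; lra).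
assert (d_le_1 : d <= 1) by apply Rmin_l.
assert (d_le_r : d <= (1 - (u ^ 2 + v ^ 2)) / 6) by apply Rmin_r.
exists (mkposreal d d_pos); intros a b Ha Hb.
change (Rabs (a - u) < d) in Ha; change (Rabs (b - v) < d) in Hb.
apply Rabs_def2 in Ha as [Ha_hi Ha_lo], Hb as [Hb_hi Hb_lo].
assert (u_lo : -1 < u) by nra. assert (u_hi : u < 1) by nra.
assert (v_lo : -1 < v) by nra. assert (v_hi : v < 1) by nra.
assert (a_sqr : a ^ 2 < u ^ 2 + 3 * d) by nra.
assert (b_sqr : b ^ 2 < v ^ 2 + 3 * d) by nra.
lra.
Qed.

Lemma pd_ext_udisc (i : nat) (f g : R -> R -> R) (u v : R) :
  (forall a b, udisc a b -> f a b = g a b) -> udisc u v -> pd i f u v = pd i g u v.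
Proof.
intros Hfg Huv; destruct (udisc_locally_2d u v Huv) as [d Hd].
unfold pd, pu, pv; destruct (Nat.eqb i 1); apply Derive_ext_loc; exists d;
  intros t Ht; apply Hfg, Hd; auto; rewrite Rminus_eq_0, Rabs_R0; apply cond_pos.
Qed.

Lemma pd_dotF_udisc (i n : nat) (A B : VecFun) (f : R -> R -> R) (u v : R) :
  (forall a b, udisc a b -> dotF n A B a b = f a b) -> udisc u v ->
  ex_partialsV n A u v -> ex_partialsV n B u v ->
  dotF n (pdV i A) B u v + dotF n A (pdV i B) u v = pd i f u v.
Proof.
intros HAB Huv HA HB; rewrite <- pd_dotF by assumption.
apply pd_ext_udisc; assumption.
Qed.

Lemma Ck_S (k : nat) (U : R -> R -> Prop) (f : R -> R -> R) : Ck (S k) U f -> Ck k U f.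
Proof.
revert f; induction k as [|k IH]; intros f [f_cont [f_partials [fu fv]]].
- split; [exact f_cont|exact I].
- split; [exact f_cont|split; [exact f_partials|split; apply IH; assumption]].
Qed.

Lemma Ck_ex_partials (k : nat) (U : R -> R -> Prop) (f : R -> R -> R) (u v : R) :
  Ck (S k) U f -> U u v -> ex_partials f u v.
Proof. intros [_ [f_partials _]] Huv; exact (f_partials u v Huv). Qed.

Lemma Ck_pd (i k : nat) (U : R -> R -> Prop) (f : R -> R -> R) :
  Ck (S k) U f -> Ck k U (pd i f).
Proof. intros [_ [_ [fu fv]]]; unfold pd; destruct (Nat.eqb i 1); assumption. Qed.

Lemma Ck_continuous (k : nat) (U : R -> R -> Prop) (f : R -> R -> R) (u v : R) :
  Ck k U f -> U u v -> continuity_2d_pt f u v.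
Proof.
intros Hf Huv; apply continuity_2d_pt_filterlim.
destruct k; destruct Hf as [f_cont _]; exact (f_cont u v Huv).
Qed.

Lemma pu_pv_C2 (f : R -> R -> R) (u v : R) :
  Ck 2 udisc f -> udisc u v -> pu (pv f) u v = pv (pu f) u v.
Proof.
intros Hf Huv; apply Schwarz.
- destruct (udisc_locally_2d u v Huv) as [d Hd]; exists d; intros a b Ha Hb.
  specialize (Hd a b Ha Hb).
  destruct (Ck_ex_partials 1 _ f a b Hf Hd) as [fu fv].
  destruct (Ck_ex_partials 0 _ (pd 2 f) a b (Ck_pd 2 1 _ f Hf) Hd) as [fvu _].
  destruct (Ck_ex_partials 0 _ (pd 1 f) a b (Ck_pd 1 1 _ f Hf) Hd) as [_ fuv].
  repeat split; assumption.
- exact (Ck_continuous 0 _ _ u v (Ck_pd 1 0 _ _ (Ck_pd 2 1 _ f Hf)) Huv).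
- exact (Ck_continuous 0 _ _ u v (Ck_pd 2 0 _ _ (Ck_pd 1 1 _ f Hf)) Huv).
Qed.

Lemma pd_comm_C2 (i j : nat) (f : R -> R -> R) (u v : R) :
  Ck 2 udisc f -> udisc u v -> pd i (pd j f) u v = pd j (pd i f) u v.
Proof.
intros Hf Huv; unfold pd.
destruct (Nat.eqb i 1), (Nat.eqb j 1); try reflexivity.
- apply pu_pv_C2; assumption.
- symmetry; apply pu_pv_C2; assumption.
Qed.

Lemma pd_comm_inner_C3 (i j l : nat) (f : R -> R -> R) (u v : R) :
  Ck 3 udisc f -> udisc u v -> pd i (pd j (pd l f)) u v = pd i (pd l (pd j f)) u v.
Proof.
intros Hf; apply pd_ext_udisc; intros a b Hab.
apply pd_comm_C2; [apply Ck_S|]; assumption.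
Qed.

Lemma dotF_comm (n : nat) (A B : VecFun) (u v : R) : dotF n A B u v = dotF n B A u v.
Proof. unfold dotF; apply sumR_ext; intros; ring. Qed.

Lemma dotF_ext_l (n : nat) (A A' B : VecFun) (u v : R) :
  (forall k, (k < n)%nat -> A k u v = A' k u v) -> dotF n A B u v = dotF n A' B u v.
Proof. intros HA; unfold dotF; apply sumR_ext; intros k Hk; rewrite HA; auto. Qed.

Lemma d_wbar_pair (f g : R -> R -> R) (u v : R) :
  d_wbar (fun a b => (f a b, g a b)) u v =
  ((pd 1 f u v - pd 2 g u v) / 2, (pd 1 g u v + pd 2 f u v) / 2).
Proof.
unfold d_wbar, Cpu, Cpv, pd; simpl.
change (fun a b => f a b) with f; change (fun a b => g a b) with g.
apply injective_projections; simpl; field.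
Qed.

Lemma d_w_cplx (f : R -> R -> R) (u v : R) :
  d_w (cplx f) u v = (pd 1 f u v / 2, - (pd 2 f u v / 2)).
Proof.
unfold d_w, Cpu, Cpv, cplx, pd; simpl.
change (fun a b => f a b) with f.
unfold pu at 2, pv at 2; rewrite !Derive_const.
apply injective_projections; simpl; field.
Qed.

Section ConformalSurface.
Variables (n : nat) (X : VecFun) (N : nat -> VecFun).
Hypothesis n_ge2 : (2 <= n)%nat.
Hypothesis X_C3 : forall k, (k < n)%nat -> Ck 3 udisc (X k).
Hypothesis conformal : forall u v, udisc u v ->
  0 < Wf n X u v /\
  dotF n (pdV 2 X) (pdV 2 X) u v = Wf n X u v /\
  dotF n (pdV 1 X) (pdV 2 X) u v = 0.
Hypothesis N_C2 : forall s k, (1 <= s <= n - 2)%nat -> (k < n)%nat -> Ck 2 udisc (N s k).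
Hypothesis N_normal : forall s i u v, (1 <= s <= n - 2)%nat -> (1 <= i <= 2)%nat -> udisc u v ->
  dotF n (N s) (pdV i X) u v = 0.
Hypothesis N_orthonormal : forall s om u v, (1 <= s <= n - 2)%nat -> (1 <= om <= n - 2)%nat ->
  udisc u v -> dotF n (N s) (N om) u v = if Nat.eqb s om then 1 else 0.
Variables u v : R.
Hypothesis in_disc : udisc u v.

Local Notation W := (Wf n X u v).
Local Notation L s i j := (Lff n X N s i j u v).
Local Notation T om s i := (Tor n N om s i u v).

Lemma ex_partials_dX (i : nat) : ex_partialsV n (pdV i X) u v.
Proof. intros k Hk; exact (Ck_ex_partials 1 _ _ u v (Ck_pd i 2 _ _ (X_C3 k Hk)) in_disc). Qed.

Lemma ex_partials_ddX (i j : nat) : ex_partialsV n (pdV i (pdV j X)) u v.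
Proof.
intros k Hk.
exact (Ck_ex_partials 0 _ _ u v (Ck_pd i 1 _ _ (Ck_pd j 2 _ _ (X_C3 k Hk))) in_disc).
Qed.

Lemma ex_partials_N (s : nat) : (1 <= s <= n - 2)%nat -> ex_partialsV n (N s) u v.
Proof. intros Hs k Hk; exact (Ck_ex_partials 1 _ _ u v (N_C2 s k Hs Hk) in_disc). Qed.

Lemma W_pos : 0 < W.
Proof. apply conformal, in_disc. Qed.

Lemma ddX_sym (i j : nat) (B : VecFun) :
  dotF n (pdV i (pdV j X)) B u v = dotF n (pdV j (pdV i X)) B u v.
Proof.
apply dotF_ext_l; intros k Hk.
apply pd_comm_C2; [apply Ck_S, X_C3|]; assumption.
Qed.

Lemma Lff_sym (s i j : nat) : L s i j = L s j i.
Proof. apply ddX_sym. Qed.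

Lemma dot_Xuu_Xu : dotF n (pdV 1 (pdV 1 X)) (pdV 1 X) u v = pd 1 (Wf n X) u v / 2.
Proof.
pose proof (pd_dotF_udisc 1 n (pdV 1 X) (pdV 1 X) (Wf n X) u v (fun _ _ _ => eq_refl)
              in_disc (ex_partials_dX 1) (ex_partials_dX 1)) as HW.
rewrite (dotF_comm n (pdV 1 X)) in HW; lra.
Qed.

Lemma dot_Xuv_Xu : dotF n (pdV 1 (pdV 2 X)) (pdV 1 X) u v = pd 2 (Wf n X) u v / 2.
Proof.
pose proof (pd_dotF_udisc 2 n (pdV 1 X) (pdV 1 X) (Wf n X) u v (fun _ _ _ => eq_refl)
              in_disc (ex_partials_dX 1) (ex_partials_dX 1)) as HW.
rewrite (dotF_comm n (pdV 1 X)), <- ddX_sym in HW; lra.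
Qed.

Lemma dot_Xuv_Xv : dotF n (pdV 1 (pdV 2 X)) (pdV 2 X) u v = pd 1 (Wf n X) u v / 2.
Proof.
pose proof (pd_dotF_udisc 1 n (pdV 2 X) (pdV 2 X) (Wf n X) u v
              (fun a b Hab => proj1 (proj2 (conformal a b Hab)))
              in_disc (ex_partials_dX 2) (ex_partials_dX 2)) as HW.
rewrite (dotF_comm n (pdV 2 X)) in HW; lra.
Qed.

Lemma dot_Xvv_Xv : dotF n (pdV 2 (pdV 2 X)) (pdV 2 X) u v = pd 2 (Wf n X) u v / 2.
Proof.
pose proof (pd_dotF_udisc 2 n (pdV 2 X) (pdV 2 X) (Wf n X) u v
              (fun a b Hab => proj1 (proj2 (conformal a b Hab)))
              in_disc (ex_partials_dX 2) (ex_partials_dX 2)) as HW.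
rewrite (dotF_comm n (pdV 2 X)) in HW; lra.
Qed.

Lemma dot_Xuu_Xv : dotF n (pdV 1 (pdV 1 X)) (pdV 2 X) u v = - (pd 2 (Wf n X) u v / 2).
Proof.
pose proof (pd_dotF_udisc 1 n (pdV 1 X) (pdV 2 X) (fun _ _ => 0) u v
              (fun a b Hab => proj2 (proj2 (conformal a b Hab)))
              in_disc (ex_partials_dX 1) (ex_partials_dX 2)) as HW.
rewrite pd_const, (dotF_comm n (pdV 1 X)), dot_Xuv_Xu in HW; lra.
Qed.

Lemma dot_Xvv_Xu : dotF n (pdV 2 (pdV 2 X)) (pdV 1 X) u v = - (pd 1 (Wf n X) u v / 2).
Proof.
pose proof (pd_dotF_udisc 2 n (pdV 1 X) (pdV 2 X) (fun _ _ => 0) u v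
              (fun a b Hab => proj2 (proj2 (conformal a b Hab)))
              in_disc (ex_partials_dX 1) (ex_partials_dX 2)) as HW.
rewrite pd_const, <- ddX_sym, dot_Xuv_Xv, dotF_comm in HW; lra.
Qed.

Lemma dot_dN_dX (s i j : nat) : (1 <= s <= n - 2)%nat -> (1 <= j <= 2)%nat ->
  dotF n (pdV i (N s)) (pdV j X) u v = - L s i j.
Proof.
intros Hs Hj.
pose proof (pd_dotF_udisc i n (N s) (pdV j X) (fun _ _ => 0) u v
              (fun a b Hab => N_normal s j a b Hs Hj Hab)
              in_disc (ex_partials_N s Hs) (ex_partials_dX j)) as HN.
rewrite pd_const in HN; unfold Lff; rewrite (dotF_comm n (pdV i (pdV j X))); lra.
Qed.

Lemma dot_dN_N (s om i : nat) : (1 <= s <= n - 2)%nat -> (1 <= om <= n - 2)%nat ->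
  dotF n (pdV i (N s)) (N om) u v = T om s i.
Proof.
intros Hs Hom; unfold Tor.
destruct (Nat.eqb_spec s om) as [<-|_]; [|reflexivity].
pose proof (pd_dotF_udisc i n (N s) (N s) (fun _ _ => if Nat.eqb s s then 1 else 0) u v
              (fun a b Hab => N_orthonormal s s a b Hs Hs Hab)
              in_disc (ex_partials_N s Hs) (ex_partials_N s Hs)) as HN.
rewrite pd_const, (dotF_comm n (N s)) in HN; lra.
Qed.

Lemma Tor_antisym (s om i : nat) : (1 <= s <= n - 2)%nat -> (1 <= om <= n - 2)%nat ->
  T s om i = - T om s i.
Proof.
intros Hs Hom.
pose proof (pd_dotF_udisc i n (N s) (N om) (fun _ _ => if Nat.eqb s om then 1 else 0) u v
              (fun a b Hab => N_orthonormal s om a b Hs Hom Hab)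
              in_disc (ex_partials_N s Hs) (ex_partials_N om Hom)) as HN.
rewrite pd_const, (dotF_comm n (N s)), !dot_dN_N in HN by assumption; lra.
Qed.

Lemma frame_expansion (A B : VecFun) :
  dotF n A B u v =
  (dotF n A (pdV 1 X) u v * dotF n B (pdV 1 X) u v
   + dotF n A (pdV 2 X) u v * dotF n B (pdV 2 X) u v) / W
  + sumR (n - 2) (fun j => dotF n A (N (S j)) u v * dotF n B (N (S j)) u v).
Proof.
pose (frame i := match i with 0%nat => pdV 1 X | 1%nat => pdV 2 X | S (S j) => N (S j) end).
pose (norm2 i := match i with 0%nat | 1%nat => W | _ => 1 end).
destruct (conformal u v in_disc) as [W_gt0 [Xv_norm2 Xu_Xv]].
unfold dotF at 1.
rewrite (parseval_orthogonal n (fun i k => frame i k u v) norm2).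
- rewrite sumR_recl2 by exact n_ge2; simpl.
  rewrite (sumR_ext (n - 2) _ (fun j => dotF n A (N (S j)) u v * dotF n B (N (S j)) u v))
    by (intros; unfold dotF; field).
  unfold dotF; field; lra.
- intros [|[|i]] Hi; simpl; lra.
- intros i j Hi Hj; change (dotF n (frame i) (frame j) u v = if Nat.eqb i j then norm2 i else 0).
  destruct i as [|[|i]], j as [|[|j]]; simpl;
    rewrite ?(dotF_comm n (pdV _ X) (N _)), ?N_normal, ?N_orthonormal by (auto; lia);
    rewrite ?(dotF_comm n (pdV 2 X) (pdV 1 X)); auto.
Qed.

Lemma weingarten (A : VecFun) (s i : nat) : (1 <= s <= n - 2)%nat ->
  dotF n A (pdV i (N s)) u v =
  - (dotF n A (pdV 1 X) u v * L s i 1 + dotF n A (pdV 2 X) u v * L s i 2) / W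
  + sumR (n - 2) (fun j => dotF n A (N (S j)) u v * T (S j) s i).
Proof.
intros Hs; rewrite frame_expansion, !dot_dN_dX by (auto; lia).
rewrite (sumR_ext (n - 2) _ (fun j => dotF n A (N (S j)) u v * T (S j) s i)).
- field; apply Rgt_not_eq, W_pos.
- intros j Hj; rewrite dot_dN_N by (auto; lia); reflexivity.
Qed.

Lemma ex_partials_Lff (s i j : nat) : (1 <= s <= n - 2)%nat -> ex_partials (Lff n X N s i j) u v.
Proof. intros Hs; apply ex_partials_dotF; [apply ex_partials_ddX|apply ex_partials_N, Hs]. Qed.

Lemma ex_partials_Wf : ex_partials (Wf n X) u v.
Proof. apply ex_partials_dotF; apply ex_partials_dX. Qed.

Lemma pd_Lff (s i j l : nat) : (1 <= s <= n - 2)%nat ->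
  pd l (Lff n X N s i j) u v =
  dotF n (pdV l (pdV i (pdV j X))) (N s) u v + dotF n (pdV i (pdV j X)) (pdV l (N s)) u v.
Proof. intros Hs; apply pd_dotF; [apply ex_partials_ddX|apply ex_partials_N, Hs]. Qed.

Lemma codazzi_1 (s : nat) : (1 <= s <= n - 2)%nat ->
  pd 2 (Lff n X N s 1 2) u v - pd 1 (Lff n X N s 2 2) u v =
  - ((L s 1 1 + L s 2 2) * pd 1 (Wf n X) u v / (2 * W))
  + sumR (n - 2) (fun j => L (S j) 1 2 * T (S j) s 2 - L (S j) 2 2 * T (S j) s 1).
Proof.
intros Hs; rewrite !pd_Lff by exact Hs.
rewrite (dotF_ext_l n (pdV 2 (pdV 1 (pdV 2 X))) (pdV 1 (pdV 2 (pdV 2 X))))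
  by (intros k Hk; apply pd_comm_C2; [apply Ck_pd, X_C3|]; assumption).
rewrite (weingarten (pdV 1 (pdV 2 X)) s 2 Hs), (weingarten (pdV 2 (pdV 2 X)) s 1 Hs).
rewrite dot_Xuv_Xu, dot_Xuv_Xv, dot_Xvv_Xu, dot_Xvv_Xv, (Lff_sym s 2 1), sumR_minus.
(* Naming the derivatives keeps [field] from unfolding [Derive] when it compares atoms. *)
unfold Lff; set (Wu := pd 1 (Wf n X) u v); set (Wv := pd 2 (Wf n X) u v).
field; apply Rgt_not_eq, W_pos.
Qed.

Lemma codazzi_2 (s : nat) : (1 <= s <= n - 2)%nat ->
  pd 2 (Lff n X N s 1 1) u v - pd 1 (Lff n X N s 1 2) u v =
  (L s 1 1 + L s 2 2) * pd 2 (Wf n X) u v / (2 * W)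
  + sumR (n - 2) (fun j => L (S j) 1 1 * T (S j) s 2 - L (S j) 1 2 * T (S j) s 1).
Proof.
intros Hs; rewrite !pd_Lff by exact Hs.
rewrite (dotF_ext_l n (pdV 2 (pdV 1 (pdV 1 X))) (pdV 1 (pdV 1 (pdV 2 X)))).
2:{ intros k Hk; unfold pdV.
    rewrite (pd_comm_C2 2 1 (pd 1 (X k))) by (try apply Ck_pd, X_C3; assumption).
    apply pd_comm_inner_C3; [apply X_C3|]; assumption. }
rewrite (weingarten (pdV 1 (pdV 1 X)) s 2 Hs), (weingarten (pdV 1 (pdV 2 X)) s 1 Hs).
rewrite dot_Xuu_Xu, dot_Xuu_Xv, dot_Xuv_Xu, dot_Xuv_Xv, (Lff_sym s 2 1), sumR_minus.
unfold Lff; set (Wu := pd 1 (Wf n X) u v); set (Wv := pd 2 (Wf n X) u v).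
field; apply Rgt_not_eq, W_pos.
Qed.

Lemma Hopf_d_wbar (s : nat) : (1 <= s <= n - 2)%nat ->
  d_wbar (Hopf n X N s) u v =
  ((pd 1 (Lff n X N s 1 1) u v - pd 1 (Lff n X N s 2 2) u v) / 2 + pd 2 (Lff n X N s 1 2) u v,
   (pd 2 (Lff n X N s 1 1) u v - pd 2 (Lff n X N s 2 2) u v) / 2 - pd 1 (Lff n X N s 1 2) u v).
Proof.
intros Hs; unfold Hopf; rewrite d_wbar_pair.
rewrite !pd_minus, !pd_opp, !pd_scal by (apply ex_partials_Lff, Hs).
apply injective_projections; simpl; field.
Qed.

Lemma pd_Hmean (s i : nat) : (1 <= s <= n - 2)%nat ->
  pd i (Hmean n X N s) u v * W =
  (pd i (Lff n X N s 1 1) u v + pd i (Lff n X N s 2 2) u v) / 2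
  - (L s 1 1 + L s 2 2) * pd i (Wf n X) u v / (2 * W).
Proof.
intros Hs; pose proof W_pos as W_pos; unfold Hmean.
rewrite (pd_div i u v (fun a b => Lff n X N s 1 1 a b + Lff n X N s 2 2 a b)
                      (fun a b => 2 * Wf n X a b)).
- rewrite (pd_plus i u v (Lff n X N s 1 1) (Lff n X N s 2 2)), (pd_scal i u v 2 (Wf n X))
    by (apply ex_partials_Lff, Hs).
  set (L11i := pd i (Lff n X N s 1 1) u v); set (L22i := pd i (Lff n X N s 2 2) u v).
  set (Wi := pd i (Wf n X) u v).
  field; lra.
- apply ex_partials_plus; apply ex_partials_Lff, Hs.
- apply ex_partials_scal, ex_partials_Wf.
- cbv beta; lra.
Qed.

Lemma Hmean_d_w (s : nat) : (1 <= s <= n - 2)%nat ->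
  Cmult (Cmult (RtoC 2) (d_w (cplx (Hmean n X N s)) u v)) (RtoC W) =
  ((pd 1 (Lff n X N s 1 1) u v + pd 1 (Lff n X N s 2 2) u v) / 2
     - (L s 1 1 + L s 2 2) * pd 1 (Wf n X) u v / (2 * W),
   - ((pd 2 (Lff n X N s 1 1) u v + pd 2 (Lff n X N s 2 2) u v) / 2
     - (L s 1 1 + L s 2 2) * pd 2 (Wf n X) u v / (2 * W))).
Proof.
intros Hs; rewrite d_w_cplx, <- (pd_Hmean s 1 Hs), <- (pd_Hmean s 2 Hs).
set (H1 := pd 1 (Hmean n X N s) u v); set (H2 := pd 2 (Hmean n X N s) u v).
apply injective_projections; simpl; field.
Qed.

Lemma torsion_sum (s : nat) : (1 <= s <= n - 2)%nat ->
  sumC (n - 2) (fun j =>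
    let om := S j in
    Cminus (Cmult (L om 2 2, L om 1 2) (RtoC (T s om 1)))
           (Cmult (L om 2 1, L om 1 1) (RtoC (T s om 2)))) =
  (sumR (n - 2) (fun j => L (S j) 1 2 * T (S j) s 2 - L (S j) 2 2 * T (S j) s 1),
   sumR (n - 2) (fun j => L (S j) 1 1 * T (S j) s 2 - L (S j) 1 2 * T (S j) s 1)).
Proof.
intros Hs; apply injective_projections; [rewrite sumC_fst|rewrite sumC_snd];
  apply sumR_ext; intros j Hj; simpl;
  rewrite !(Tor_antisym s (S j)), (Lff_sym (S j) 2 1) by (auto; lia); ring.
Qed.

End ConformalSurface.

Theorem mainTheorem7 (n : nat) (X : VecFun) (N : nat -> VecFun) :
  (3 <= n)%nat ->
  (* X in C^3 (components) *)
  (forall k, (k < n)%nat -> Ck 3 udisc (X k)) ->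
  (* conformal immersion *)
  (forall u v, udisc u v ->
     0 < Wf n X u v /\
     dotF n (pdV 2 X) (pdV 2 X) u v = Wf n X u v /\
     dotF n (pdV 1 X) (pdV 2 X) u v = 0) ->
  (* C^2 orthonormal normal section N_1, ..., N_{n-2} *)
  (forall s k, (1 <= s <= n - 2)%nat -> (k < n)%nat -> Ck 2 udisc (N s k)) ->
  (forall s i u v, (1 <= s <= n - 2)%nat -> (1 <= i <= 2)%nat -> udisc u v ->
     dotF n (N s) (pdV i X) u v = 0) ->
  (forall s om u v, (1 <= s <= n - 2)%nat -> (1 <= om <= n - 2)%nat -> udisc u v ->
     dotF n (N s) (N om) u v = if Nat.eqb s om then 1 else 0) ->
  forall s u v, (1 <= s <= n - 2)%nat -> udisc u v ->
    d_wbar (Hopf n X N s) u v =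
    Cplus
      (Cmult (Cmult (RtoC 2) (d_w (cplx (Hmean n X N s)) u v)) (RtoC (Wf n X u v)))
      (sumC (n - 2) (fun j =>
         let om := S j in
         Cminus
           (Cmult (Lff n X N om 2 2 u v, Lff n X N om 1 2 u v) (RtoC (Tor n N s om 1 u v)))
           (Cmult (Lff n X N om 2 1 u v, Lff n X N om 1 1 u v) (RtoC (Tor n N s om 2 u v))))).
Proof.
intros Hn HX Hconf HN Hperp Horth s u v Hs Huv.
assert (n_ge2 : (2 <= n)%nat) by lia.
rewrite Hopf_d_wbar, Hmean_d_w, torsion_sum by assumption.
pose proof (codazzi_1 n X N n_ge2 HX Hconf HN Hperp Horth u v Huv s Hs) as C1.
pose proof (codazzi_2 n X N n_ge2 HX Hconf HN Hperp Horth u v Huv s Hs) as C2.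
apply injective_projections; simpl; lra.
Qed.
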